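(* Let $X_1,X_2,\dots$ be iid with $P(X_1>u)=\exp(-\int_0^u h(v)dv)$ for all $u>u_0$, where $u_0\ge0$ and $h$ is a positive, continuous, strictly increasing function with $h(v)\to\infty$. Let $S_k=X_1+\dots+X_k$, $\lambda>0$, $b>0$, $\psi(s)=h^{-1}\big(\tfrac4b\log s\big)$ (defined for $s$ large), $g(k,u)=u-\psi(k)$ and $a_k=\max\{1-2\log k/k,0\}$. Then there exist an index $k_0$ and a constant $C$ such that for all $k>k_0$ and $u>0$, $$\frac{\frac{\lambda^k}{k!}P\big(S_k>u+ba_k,\ S_{k-1}\le g(k,u)\big)}{\frac{\lambda^{k+1}}{(k+1)!}P(S_{k+1}>u+b)}\le\frac{C}{\lambda k}.$$ *)

From HB Require Import structures.
From mathcomp Require Import all_boot all_order all_algebra.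
From mathcomp Require Import all_classical all_reals all_analysis.
Set Implicit Arguments. Unset Strict Implicit. Unset Printing Implicit Defensive.
Import Order.TTheory GRing.Theory Num.Theory.
Import numFieldNormedType.Exports.
Local Open Scope classical_set_scope.
Local Open Scope ring_scope.

Definition mutually_independent {d : measure_display} {T : measurableType d}
  {R : realType} (P : probability T R) (X : nat -> {RV P >-> R}) : Prop :=
  forall (s : seq nat) (B : nat -> set R), uniq s ->
    (forall i, measurable (B i)) ->
    P (\big[setI/setT]_(i <- s) (X i @^-1` B i)) =
    (\prod_(i <- s) P (X i @^-1` B i))%E.

Definition identically_distributed {d : measure_display} {T : measurableType d}
  {R : realType} (P : probability T R) (X : nat -> {RV P >-> R}) : Prop :=
  forall (i : nat) (A : set R), measurable A ->
    P (X i @^-1` A) = P (X 0%N @^-1` A).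

(* Partial sum S_k = X_1 + ... + X_k  (X_j is X (j-1)). *)
Definition psum {d : measure_display} {T : measurableType d}
  {R : realType} (P : probability T R) (X : nat -> {RV P >-> R}) (k : nat) (w : T) : R :=
  \sum_(i < k) X i w.

Definition prob {d : measure_display} {T : measurableType d}
  {R : realType} (P : probability T R) (A : set T) : R := fine (P A).

From HB Require Import structures.
From mathcomp Require Import all_boot all_order all_algebra.
From mathcomp Require Import all_classical all_reals all_analysis measurable_realfun.
From mathcomp Require Import ring lra.
Import Order.TTheory GRing.Theory Num.Theory.
Import numFieldNormedType.Exports.
Local Open Scope classical_set_scope.
Local Open Scope ring_scope.

(* Write k = n + 1, psi = psi(k) and c = b a_k.  On the event {S_n <= u - psi}
   the increment X_{n+1} has to exceed u - S_n >= psi > u0, where its tail is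
   exp (- int_0^t h); since h is increasing, exceeding that level by a further c
   costs a factor at most exp (- c h(psi)) = k^(-4 a_k) <= k^(-2).  As the joint
   law of (S_n, X_{n+1}) is a product measure, integrating over S_n gives
     P(S_n <= u - psi, S_k > u + c) <= k^(-2) P(S_n <= u - psi, S_k > u),
   while independence of X_{k+1} gives
     P(S_{k+1} > u + b) >= P(S_n <= u - psi, S_k > u) P(X_1 > b).
   The Poisson weights contribute the factor (k + 1) / lambda <= 2 k / lambda. *)

Section prefix_independence.
Context {R : realType} {d : measure_display} {T : measurableType d}.
Context {P : probability T R}.
Variable X : nat -> {RV P >-> R}.

Definition prefix_cylinders (n : nat) : set (set T) :=
  [set A | exists2 B : nat -> set R, (forall i, measurable (B i)) &
     A = \big[setI/setT]_(i <- iota 0 n) (X i @^-1` B i)].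

Lemma measurable_bigcap_preimage (s : seq nat) (B : nat -> set R) :
  (forall i, measurable (B i)) ->
  measurable (\big[setI/setT]_(i <- s) (X i @^-1` B i)).
Proof.
move=> mB; elim: s => [|i s IH]; first by rewrite big_nil.
by rewrite big_cons; apply: measurableI => //; exact: measurable_funPTI.
Qed.

Lemma prefix_cylinders_setI_closed n : setI_closed (prefix_cylinders n).
Proof.
move=> _ _ [B1 mB1 ->] [B2 mB2 ->].
exists (fun i => B1 i `&` B2 i); first by move=> i; exact: measurableI.
by rewrite -big_split /=; apply: eq_bigr => i _; rewrite preimage_setI.
Qed.

Lemma measurable_prefix_X {n i : nat} : (i < n)%N ->
  measurable_fun setT (X i : g_sigma_algebraType (prefix_cylinders n) -> R).
Proof.
move=> ilt _ B mB; rewrite setTI; apply: sub_sigma_algebra.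
exists (fun k => if k == i then B else setT); first by move=> k; case: ifP.
have iin : i \in iota 0 n by rewrite mem_iota add0n.
rewrite (bigD1_seq i iin (iota_uniq 0 n)) /= eqxx big1 ?setIT //.
by move=> k /negPf ->; rewrite preimage_setT.
Qed.

Lemma prefix_sigma_psum_preimage {n m : nat} {A : set R} : (m <= n)%N ->
  measurable A -> <<s prefix_cylinders n >> (psum X m @^-1` A).
Proof.
move=> mn mA.
have mS : measurable_fun setT
    (psum X m : g_sigma_algebraType (prefix_cylinders n) -> R).
  apply: measurable_sum => i; apply: measurable_prefix_X.
  exact: leq_trans (ltn_ord i) mn.
by have := mS measurableT A mA; rewrite setTI.
Qed.

Lemma psumS n w : psum X n.+1 w = psum X n w + X n w.
Proof. by rewrite /psum big_ord_recr. Qed.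

Definition psum_mfun (n : nat) : {mfun T >-> R} :=
  \sum_(i < n) (X i : {mfun T >-> R}).

Lemma psum_mfunE n : psum_mfun n = psum X n :> (T -> R).
Proof. by apply/funext => w; rewrite /psum_mfun mfun_sum. Qed.

Lemma measurable_psum_preimage n (A : set R) : measurable A ->
  measurable (psum X n @^-1` A).
Proof. by move=> mA; rewrite -psum_mfunE; exact: measurable_funPTI. Qed.

Lemma measurable_psum_next n : measurable_fun setT (fun w => (psum X n w, X n w)).
Proof. by apply: measurable_fun_pair => //; rewrite -psum_mfunE. Qed.

Definition psum_next_mfun (n : nat) : {mfun T >-> (R * R)%type} :=
  mfun_Sub (mem_set (measurable_psum_next n)).

Hypothesis Xind : mutually_independent X.

Lemma indep_prefix_cylinder {n j : nat} {B : set R} {C : nat -> set R} : (n <= j)%N ->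
  measurable B -> (forall i, measurable (C i)) ->
  P (\big[setI/setT]_(i <- iota 0 n) (X i @^-1` C i) `&` X j @^-1` B) =
  (P (\big[setI/setT]_(i <- iota 0 n) (X i @^-1` C i)) * P (X j @^-1` B))%E.
Proof.
move=> nj mB mC.
pose C' i := if i == j then B else C i.
have mC' i : measurable (C' i) by rewrite /C'; case: ifP.
have C'E i : i \in iota 0 n -> C' i = C i.
  by rewrite mem_iota add0n /C'; case: eqP => // ->; rewrite ltnNge nj.
have uniq_nj : uniq (iota 0 n ++ [:: j]).
  by rewrite cat_uniq iota_uniq /= andbT orbF mem_iota add0n -leqNgt.
have := Xind _ _ uniq_nj mC'.
have C'j : C' j = B by rewrite /C' eqxx.
rewrite !big_cat !big_seq1 /= C'j.
rewrite (eq_big_seq (fun i => X i @^-1` C i)); last by move=> i /C'E ->.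
rewrite (eq_big_seq (fun i => P (X i @^-1` C i))); last by move=> i /C'E ->.
move=> ->.
by rewrite (Xind _ _ (iota_uniq 0 n) mC).
Qed.

(* Both sides are finite measures in [E] that agree on the pi-system
   [prefix_cylinders n], which contains [setT]. *)
Lemma indep_prefix_sigma {n j : nat} {B : set R} {E : set T} : (n <= j)%N ->
  measurable B -> <<s prefix_cylinders n >> E ->
  P (E `&` X j @^-1` B) = (P E * P (X j @^-1` B))%E.
Proof.
move=> nj mB sE.
have mF : measurable (X j @^-1` B) by exact: measurable_funPTI.
have PF_ge0 : 0 <= fine (P (X j @^-1` B)) by apply/fine_ge0/measure_ge0.
pose m1 := mrestr P mF.
pose m2 := mscale (NngNum PF_ge0) P.
have cyl_meas : prefix_cylinders n `<=` measurable.
  by move=> _ [C mC ->]; exact: measurable_bigcap_preimage.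
have cylT : forall i : nat, prefix_cylinders n ((fun=> setT) i).
  move=> _; exists (fun=> setT) => //.
  by rewrite big1 // => i _; rewrite preimage_setT.
have m12 : forall A, prefix_cylinders n A -> m1 A = m2 A.
  move=> _ [C mC ->]; rewrite /m1 /m2 /mrestr /mscale /=.
  rewrite (indep_prefix_cylinder nj mB mC) fineK 1?muleC //.
  exact: fin_num_measure.
have m1T : forall k : nat, (m1 setT < +oo)%E.
  move=> _; rewrite /m1 /mrestr setTI.
  by apply: (le_lt_trans (probability_le1 P mF)); rewrite ltry.
have covT : \bigcup_(k : nat) (fun _ : nat => [set: T]) k = setT.
  by rewrite predeqE => x; split => // _; exists 0%N.
have -> : P (E `&` X j @^-1` B) = m2 E.
  exact: (g_sigma_algebra_measure_unique _ cyl_meas _ cylT covT m1 m2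
    (prefix_cylinders_setI_closed n) m12 m1T E sE).
rewrite /m2 /mscale /=.
by rewrite fineK 1?muleC //; exact: fin_num_measure.
Qed.

Lemma joint_law_psum_next n (A : set (R * R)) : measurable A ->
  P ((fun w => (psum X n w, X n w)) @^-1` A) =
  (distribution P (psum_mfun n) \x distribution P (X n))%E A.
Proof.
move=> mA; have rect A1 A2 : measurable A1 -> measurable A2 ->
    distribution P (psum_next_mfun n) (A1 `*` A2) =
    (distribution P (psum_mfun n) A1 * distribution P (X n) A2)%E.
  move=> mA1 mA2; rewrite /distribution /pushforward psum_mfunE.
  have -> : psum_next_mfun n @^-1` (A1 `*` A2) = psum X n @^-1` A1 `&` X n @^-1` A2.
    by apply/seteqP; split => w.
  apply: (indep_prefix_sigma (leqnn n)) => //.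
  exact: prefix_sigma_psum_preimage.
by have := product_measure_unique rect mA; rewrite /distribution /pushforward => ->.
Qed.

End prefix_independence.

Section increasing_hazard.
Context {R : realType} {h : R -> R}.
Hypothesis hcont : {within `[0, +oo[, continuous h}.
Hypothesis hinc : forall x y, 0 <= x -> x < y -> h x < h y.

Lemma hazard_le {x y : R} : 0 <= x -> x <= y -> h x <= h y.
Proof. by move=> x0; rewrite le_eqVlt => /predU1P[->|/(hinc _ _ x0)/ltW]. Qed.

Lemma hazard_lt_reflect {x y : R} : 0 <= y -> h x < h y -> x < y.
Proof. by move=> y0; apply: contraTT; rewrite -!leNgt; exact: hazard_le. Qed.

Lemma integrable_hazard t : lebesgue_measure.-integrable `[0, t] (EFin \o h).
Proof.
apply: continuous_compact_integrable; first exact: segment_compact.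
by apply: continuous_subspaceW hcont => x /=; rewrite !in_itv /= andbT => /andP[].
Qed.

Lemma hazard_integral_shift {y c : R} : 0 <= y -> 0 <= c ->
  Rintegral lebesgue_measure `[0, y] h + c * h y <=
  Rintegral lebesgue_measure `[0, y + c] h.
Proof.
move=> y0 c0; have hint := integrable_hazard (y + c).
have := @Rintegral_itvB R h (BLeft 0) (BRight (y + c)) y hint.
rewrite !bnd_simp y0 lerDl c0 => /(_ isT isT) itvB.
rewrite -lerBrDl itvB.
have cst_int : lebesgue_measure.-integrable `]y, y + c]%classic (EFin \o (fun=> h y)).
  have cst_int0 : lebesgue_measure.-integrable `[0, y + c] (EFin \o (fun=> h y)).
    apply: continuous_compact_integrable; first exact: segment_compact.
    by apply: continuous_subspaceT => x; exact: cvg_cst.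
  by apply: integrableS cst_int0 => //; apply: subset_itvr; rewrite bnd_simp.
have h_int : lebesgue_measure.-integrable `]y, y + c]%classic (EFin \o h).
  by apply: integrableS hint => //; apply: subset_itvr; rewrite bnd_simp.
have mI : measurable (`]y, y + c]%classic : set R) by [].
have := @le_Rintegral _ _ R lebesgue_measure _ _ _ mI cst_int h_int.
rewrite Rintegral_cst //.
have -> : fine (lebesgue_measure (`]y, y + c]%classic : set R)) = c.
  rewrite (lebesgue_measure_itv (Interval (BRight y) (BRight (y + c)))) /= lte_fin.
  case: ifP => [_|]; first by rewrite -EFinD /= addrAC subrr add0r.
  by rewrite ltrDl lt_neqAle c0 andbT => /negbFE/eqP.
rewrite mulrC; apply => x /=; rewrite in_itv /= => /andP[yx _].
by apply/ltW/hinc.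
Qed.
End increasing_hazard.

Section overshoot.
Context {R : realType}.

Definition overshoot (a e : R) : set (R * R) := [set p | p.1 <= a /\ e < p.1 + p.2].

Lemma measurable_overshoot a e : measurable (overshoot a e).
Proof.
have -> : overshoot a e =
    fst @^-1` `]-oo, a] `&` (fun p : R * R => p.1 + p.2) @^-1` `]e, +oo[.
  by apply/seteqP; split => p /=; rewrite !in_itv /= ?andbT.
apply: measurableI.
- by rewrite -[X in measurable X]setTI; apply: measurable_fst => //; exact: measurable_itv.
- rewrite -[X in measurable X]setTI; apply: measurable_funD => //; exact: measurable_itv.
Qed.

Lemma xsection_overshoot a e s :
  xsection (overshoot a e) s = if s <= a then [set y | e < s + y] else set0.
Proof.
apply/seteqP; split => y; rewrite /xsection /= inE /=; case: ifP => sa //=.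
- by case.
- by case=> /= sa'; rewrite sa' in sa.
Qed.

(* Disintegrate along the first coordinate and compare the [x]-sections. *)
Lemma product_overshoot_le (mu : {measure set R -> \bar R})
    (nu : {sigma_finite_measure set R -> \bar R}) (a e c rho : R) :
  0 <= rho ->
  (forall s, s <= a ->
    (nu [set y | (e + c < s + y)%R] <= rho%:E * nu [set y | (e < s + y)%R])%E) ->
  ((mu \x nu) (overshoot a (e + c)) <= rho%:E * (mu \x nu) (overshoot a e))%E.
Proof.
move=> rho0 sectionP; rewrite /product_measure1 /= -ge0_integralZl //; last first.
  exact: measurable_fun_xsection (measurable_overshoot a e).
apply: ge0_le_integral => //.
- exact: measurable_fun_xsection (measurable_overshoot a (e + c)).
- by apply: measurable_funeM; exact: measurable_fun_xsection (measurable_overshoot a e).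
move=> s _; rewrite !xsection_overshoot; case: ifP => sa; first exact: sectionP.
by rewrite !measure0 mule0.
Qed.

End overshoot.

Section hazard_tails.
Context {R : realType} {d : measure_display} {T : measurableType d}.
Context {P : probability T R}.
Context {X : nat -> {RV P >-> R}} {h : R -> R} {u0 : R}.
Hypothesis hcont : {within `[0, +oo[, continuous h}.
Hypothesis hinc : forall x y, 0 <= x -> x < y -> h x < h y.
Hypothesis u0_ge0 : 0 <= u0.
Hypothesis Xind : mutually_independent X.
Hypothesis Xid : identically_distributed X.
Hypothesis Xtail : forall u, u0 < u ->
  P [set w | u < X 0%N w] = (expR (- Rintegral lebesgue_measure `[0, u] h))%:E.

Lemma X_gtE n t : [set w | t < X n w] = X n @^-1` `]t, +oo[.
Proof. by apply/seteqP; split => w /=; rewrite in_itv /= andbT. Qed.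

Lemma measurable_X_gt n t : measurable [set w | t < X n w].
Proof. by rewrite X_gtE; exact: measurable_funPTI. Qed.

Lemma prob_X_gt n t : P [set w | t < X n w] = P [set w | t < X 0%N w].
Proof. by rewrite !X_gtE Xid //; exact: measurable_itv. Qed.

(* Beyond [u0] the tail is an exponential, hence never vanishes. *)
Lemma prob_X_gt_pos t : 0 < prob P [set w | t < X 0%N w].
Proof.
pose t' := Num.max t u0 + 1.
have t'_gt : t < t' /\ u0 < t'.
  by split; rewrite /t' ltr_pwDr ?ltr01 // le_max lexx ?orbT.
pose A e := [set w | e < X 0%N w].
have : (P (A t') <= P (A t))%E.
  apply: le_measure; rewrite ?inE; [exact: measurable_X_gt..|].
  by move=> w /=; case: t'_gt => tt' _; exact: lt_trans.
rewrite /A Xtail; last by case: t'_gt.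
move/fine_le => /(_ isT (fin_num_measure _ _ (measurable_X_gt _ _))) /=.
exact/lt_le_trans/expR_gt0.
Qed.

Lemma law_X_tail n e s : u0 < e - s ->
  distribution P (X n) [set y | e < s + y] =
  (expR (- Rintegral lebesgue_measure `[0, e - s] h))%:E.
Proof.
move=> es; rewrite /distribution /pushforward -Xtail // -(prob_X_gt n).
by congr (P _); apply/seteqP; split => w /=; rewrite ltrBlDl.
Qed.

Lemma law_X_overshoot_le n u p c s : u0 < p -> 0 <= c -> s <= u - p ->
  (distribution P (X n) [set y | (u + c < s + y)%R] <=
   (expR (- (c * h p)))%:E * distribution P (X n) [set y | (u < s + y)%R])%E.
Proof.
move=> u0p c0 sup; rewrite !law_X_tail; [|lra..].
rewrite -EFinM lee_fin -expRD ler_expR.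
have p0 : 0 <= p by exact: le_trans u0_ge0 (ltW u0p).
have pus : p <= u - s by lra.
have hp := hazard_le hinc p0 pus.
have us0 : 0 <= u - s by lra.
have := hazard_integral_shift hcont hinc us0 c0.
rewrite (_ : u - s + c = u + c - s); last by rewrite addrAC.
have : c * h p <= c * h (u - s) by exact: ler_wpM2l.
lra.
Qed.

Lemma prob_overshoot_le n u p c : u0 < p -> 0 <= c ->
  prob P [set w | psum X n w <= u - p /\ u + c < psum X n.+1 w] <=
  expR (- (c * h p)) * prob P [set w | psum X n w <= u - p /\ u < psum X n.+1 w].
Proof.
move=> u0p c0.
pose E e := [set w | psum X n w <= u - p /\ e < psum X n.+1 w].
have eventE e : E e = (fun w => (psum X n w, X n w)) @^-1` overshoot (u - p) e.
  by apply/seteqP; split => w; rewrite /E /= psumS.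
have mE e : measurable (E e).
  rewrite eventE.
  exact: (measurable_funPTI (psum_next_mfun X n) (measurable_overshoot _ _)).
have : (P (E (u + c)%R) <= (expR (- (c * h p)))%:E * P (E u))%E.
  rewrite !eventE !(joint_law_psum_next X Xind); try exact: measurable_overshoot.
  apply: product_overshoot_le; first exact: expR_ge0.
  by move=> s sa; apply: law_X_overshoot_le.
move/fine_le; rewrite fineM ?fin_numM ?fin_num_measure //; exact.
Qed.

Lemma prob_psum_lower n a u t :
  prob P [set w | psum X n w <= a /\ u < psum X n.+1 w] *
    prob P [set w | t < X 0%N w] <=
  prob P [set w | u + t < psum X n.+2 w].
Proof.
set E := [set w | psum X n w <= a /\ u < psum X n.+1 w].
have EE : E = psum X n @^-1` `]-oo, a] `&` psum X n.+1 @^-1` `]u, +oo[.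
  by apply/seteqP; split => w /=; rewrite !in_itv /= ?andbT.
have E_prefix : <<s prefix_cylinders X n.+1 >> E.
  rewrite EE; apply: (@measurableI _ (g_sigma_algebraType (prefix_cylinders X n.+1)));
    by apply: prefix_sigma_psum_preimage; rewrite ?leqnSn.
have mE : measurable E.
  by rewrite EE; apply: measurableI; exact: measurable_psum_preimage.
set F := [set w | t < X 0%N w].
have mF : measurable F by exact: measurable_X_gt.
set G := [set w | u + t < psum X n.+2 w].
have mG : measurable G.
  have -> : G = psum X n.+2 @^-1` `]u + t, +oo[.
    by apply/seteqP; split => w /=; rewrite in_itv /= andbT.
  exact: measurable_psum_preimage.
have : (P E * P F <= P G)%E.
  rewrite /F -(prob_X_gt n.+1) X_gtE.
  rewrite -(indep_prefix_sigma X Xind (leqnn n.+1) (measurable_itv _) E_prefix).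
  apply: le_measure; rewrite ?inE //.
    by apply: measurableI => //; exact: measurable_funPTI.
  move=> w [[/= Sa Su]]; rewrite in_itv /= andbT => Xt.
  by rewrite /G /= psumS; lra.
by move/fine_le; rewrite fineM ?fin_numM ?fin_num_measure //; exact.
Qed.

End hazard_tails.

Lemma poisson_weight_ratio (R : realFieldType) (lam : R) k : 0 < lam ->
  (lam ^+ k / k`!%:R) / (lam ^+ k.+1 / k.+1`!%:R) = k.+1%:R / lam.
Proof.
move=> lam_gt0; rewrite factS natrM exprS.
have fact_gt0R : 0 < k`!%:R :> R by rewrite ltr0n fact_gt0.
field; rewrite !lt0r_neq0 ?exprn_gt0 //.
Qed.

Section logarithmic_level.
Context {R : realType}.

Lemma ln_le_quarter {x : R} : 100 <= x -> ln x <= x / 4.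
Proof.
move=> x100; have -> : x = 16 * (x / 16) by field.
rewrite lnM ?posrE; try lra.
have := @ln_sublinear R 16 ltac:(lra).
have := @ln_sublinear R (x / 16) ltac:(lra).
lra.
Qed.

Lemma half_le_log_weight {x : R} : 100 <= x -> 1 / 2 <= Num.max (1 - 2 * ln x / x) 0.
Proof.
move=> x100; rewrite le_max; apply/orP; left.
have : 2 * ln x / x <= 1 / 2 by rewrite ler_pdivrMr; have := ln_le_quarter x100; lra.
lra.
Qed.

Lemma expR_log_weight_sq {a x : R} : 1 / 2 <= a -> 1 <= x ->
  expR (- (4 * a * ln x)) * x ^+ 2 <= 1.
Proof.
move=> a_ge x_ge1; have ln_ge0 : 0 <= ln x by exact: ln_ge0.
rewrite -[x in x ^+ 2]lnK ?posrE; last by lra.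
rewrite -expRM_natl -expRD expR_le1; nra.
Qed.

End logarithmic_level.

Lemma poisson_ratio_le {R : realFieldType} {lam q rho xN xD xDD : R} {k : nat} :
  (0 < k)%N -> 0 < lam -> 0 < q -> 0 <= rho -> rho * k%:R ^+ 2 <= 1 ->
  0 <= xN -> xN <= rho * xD -> 0 <= xD -> xD * q <= xDD ->
  (lam ^+ k / k`!%:R * xN) / (lam ^+ k.+1 / k.+1`!%:R * xDD) <= 2 / q / (lam * k%:R).
Proof.
move=> k_gt0 lam_gt0 q_gt0 rho_ge0 rho_k xN_ge0 xN_le xD_ge0 xDD_ge.
have k_ge1 : 1 <= k%:R :> R by rewrite ler1n.
have ratio_le : xN / xDD <= rho / q.
  have [->|xDD_neq0] := eqVneq xDD 0; first by rewrite invr0 mulr0 divr_ge0 // ltW.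
  have xDD_gt0 : 0 < xDD.
    by rewrite lt_def xDD_neq0 (le_trans _ xDD_ge) // mulr_ge0 // ltW.
  rewrite ler_pdivrMr // mulrAC ler_pdivlMr //.
  apply: (le_trans (ler_wpM2r (ltW q_gt0) xN_le)).
  by rewrite -mulrA ler_wpM2l.
rewrite -mulf_div poisson_weight_ratio //.
apply: (le_trans (ler_wpM2l _ ratio_le)); first by rewrite divr_ge0 ?ltW.
have -> : k.+1%:R / lam * (rho / q) = (k.+1%:R * k%:R * rho) * (lam * q * k%:R)^-1.
  by field; rewrite !lt0r_neq0 // (lt_le_trans ltr01).
have -> : 2 / q / (lam * k%:R) = 2 * (lam * q * k%:R)^-1.
  by field; rewrite !lt0r_neq0 // (lt_le_trans ltr01).
apply: ler_wpM2r; first by rewrite invr_ge0 !mulr_ge0 // ltW.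
rewrite -natr1; nra.
Qed.

Lemma log_hazard_level_large {R : realType} {h psi : R -> R} {b : R} (u0 : R) :
  (forall x y, 0 <= x -> x < y -> h x < h y) -> 0 < b ->
  (exists s0 : R, forall s, s0 < s -> 0 <= psi s /\ h (psi s) = 4 / b * ln s) ->
  exists k0 : nat, forall k : nat, (k0 < k)%N ->
    u0 < psi k%:R /\
    expR (- (b * Num.max (1 - 2 * ln k%:R / k%:R) 0 * h (psi k%:R))) * k%:R ^+ 2 <= 1.
Proof.
move=> hinc b_gt0 [s0 psiP].
exists (maxn (maxn (Num.truncn s0) (Num.truncn (expR (b * h u0 / 4)))) 100) => k.
rewrite !gtn_max => /andP[/andP[k_s0 k_hu0] k_100].
have k_ge : forall x : R, (Num.truncn x < k)%N -> x < k%:R.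
  by move=> x xk; apply: (lt_le_trans (truncnS_gt x)); rewrite ler_nat.
have k100 : 100 <= k%:R :> R by rewrite (ler_nat R 100) ltnW.
have [psi_ge0 hpsi] := psiP _ (k_ge _ k_s0).
split.
  have lnk : b * h u0 / 4 < ln k%:R.
    rewrite -[X in X < _]expRK ltr_ln ?posrE ?expR_gt0 //; [exact: k_ge | lra].
  apply: (hazard_lt_reflect hinc psi_ge0).
  have -> : h u0 = 4 / b * (b * h u0 / 4) by field; rewrite lt0r_neq0.
  by rewrite hpsi ltr_pM2l ?divr_gt0.
have -> : b * Num.max (1 - 2 * ln k%:R / k%:R) 0 * h (psi k%:R) =
    4 * Num.max (1 - 2 * ln k%:R / k%:R) 0 * ln (k%:R : R).
  by rewrite hpsi; field; rewrite lt0r_neq0.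
by apply: expR_log_weight_sq; [exact: half_le_log_weight | lra].
Qed.

Theorem lemma8 (R : realType) (d : measure_display) (T : measurableType d)
  (P : probability T R) (X : nat -> {RV P >-> R})
  (h : R -> R) (u0 lam b : R) (psi : R -> R)
  (hpos : forall v, 0 <= v -> 0 < h v)
  (hcont : {within `[0, +oo[, continuous h})
  (hinc : forall x y, 0 <= x -> x < y -> h x < h y)
  (hinf : h x @[x --> +oo] --> +oo)
  (u0_ge0 : 0 <= u0)
  (Xind : mutually_independent X)
  (Xid : identically_distributed X)
  (Xtail : forall u, u0 < u ->
     P [set w | u < X 0%N w] =
     (expR (- Rintegral lebesgue_measure `[0, u] h))%:E)
  (lam_gt0 : 0 < lam) (b_gt0 : 0 < b)
  (psi_def : exists s0 : R, forall s, s0 < s ->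
     0 <= psi s /\ h (psi s) = 4 / b * ln s) :
  let g := fun (k : nat) (u : R) => u - psi k%:R in
  let a := fun k : nat => Num.max (1 - 2 * ln k%:R / k%:R) 0 in
  exists (k0 : nat) (C : R), forall (k : nat) (u : R), (k0 < k)%N -> 0 < u ->
    (lam ^+ k / (k`!)%:R *
       prob P [set w | u + b * a k < psum X k w /\ psum X k.-1 w <= g k u])
    / (lam ^+ k.+1 / (k.+1`!)%:R * prob P [set w | u + b < psum X k.+1 w])
    <= C / (lam * k%:R).
Proof.
(* [hpos] and [hinf] only make [psi] well defined, which [psi_def] asserts. *)
move=> g a.
have [k0 k0P] := log_hazard_level_large u0 hinc b_gt0 psi_def.
exists k0, (2 / prob P [set w | b < X 0%N w]) => -[|n] u; first by rewrite ltn0.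
move=> /k0P[u0_psi rho_k] _.
have -> : [set w | u + b * a n.+1 < psum X n.+1 w /\ psum X n.+1.-1 w <= g n.+1 u] =
    [set w | psum X n w <= u - psi n.+1%:R /\ u + b * a n.+1 < psum X n.+1 w].
  by apply/seteqP; split => w [].
apply: (poisson_ratio_le (ltn0Sn n) lam_gt0 (prob_X_gt_pos Xtail b) (expR_ge0 _) rho_k).
- exact/fine_ge0/measure_ge0.
- apply: (prob_overshoot_le hcont hinc u0_ge0 Xind Xid Xtail) => //.
  by apply: mulr_ge0; [exact: ltW | rewrite /a /= le_max lexx orbT].
- exact/fine_ge0/measure_ge0.
- exact: (prob_psum_lower Xind Xid).
Qed.
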